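(* Let $\Delta=\{x_0,\dots,x_d\}$ and $\Delta'=\{y_0,\dots,y_d\}$ be vertex sets of two regular simplices of edge length $1$ in $\mathbb{R}^d$. If $\mathrm{diam}(\Delta\cup\Delta')=1$, then $\Delta=\Delta'$.
   Context: A regular simplex of edge length $1$ in $\mathbb{R}^d$ is given by its vertex set: $d+1$ points at pairwise Euclidean distance exactly $1$. $\mathrm{diam}(A)=\sup_{x,y\in A}\|x-y\|_2$. *)

From mathcomp Require Import all_boot all_order all_algebra.
From mathcomp Require Import all_classical all_reals.
Set Implicit Arguments. Unset Strict Implicit. Unset Printing Implicit Defensive.
Import Order.TTheory GRing.Theory Num.Theory.
Local Open Scope ring_scope.
Local Open Scope classical_set_scope.

Definition edist (R : realType) (d : nat) (u v : 'rV[R]_d) : R :=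
  Num.sqrt (\sum_(k < d) (u ord0 k - v ord0 k) ^+ 2).

Definition diam (R : realType) (d : nat) (A : set 'rV[R]_d) : R :=
  sup [set edist p q | p in A & q in A].

Definition regular_unit_simplex (R : realType) (d : nat)
  (x : 'I_d.+1 -> 'rV[R]_d) : Prop :=
  forall i j : 'I_d.+1, i != j -> edist (x i) (x j) = 1.

From mathcomp Require Import all_boot all_order all_algebra.
From mathcomp Require Import all_classical all_reals.
From mathcomp Require Import ring lra.
Import Order.TTheory GRing.Theory Num.Theory.
Set Implicit Arguments. Unset Strict Implicit. Unset Printing Implicit Defensive.
Local Open Scope ring_scope.

(* Use barycentric coordinates l (with sum 1) with respect to the simplex x.
   Since |sum_i v_i x_i|^2 = |v|^2 / 2 whenever sum_i v_i = 0, the simplex is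
   affinely independent, hence spans, and |p - x_j|^2 = (|l|^2 + 1) / 2 - l_j.
   A point within distance 1 of every x_j thus has |l|^2 <= 1, with equality
   only at a vertex.  On the other hand the squared distances from the y_j to
   the centroid of x add up to at least d / 2, which forces
   sum_j |m_j|^2 >= d + 1 for the coordinates m_j of the y_j.  So every y_j
   is a vertex of x, and the conclusion follows by symmetry. *)

Section Dot.
Variables (R : realFieldType) (n : nat).
Implicit Types (u v w : 'rV[R]_n) (a : R).

Definition dot u v : R := \sum_k u 0 k * v 0 k.

Lemma dotC u v : dot u v = dot v u.
Proof. by apply: eq_bigr => k _; rewrite mulrC. Qed.

Lemma dotDl u v w : dot (u + v) w = dot u w + dot v w.
Proof. by rewrite /dot -big_split; apply: eq_bigr => k _; rewrite mxE mulrDl. Qed.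

Lemma dotNl u v : dot (- u) v = - dot u v.
Proof. by rewrite /dot -sumrN; apply: eq_bigr => k _; rewrite mxE mulNr. Qed.

Lemma dot0l v : dot 0 v = 0.
Proof. by rewrite /dot big1 // => k _; rewrite mxE mul0r. Qed.

Lemma dotBl u v w : dot (u - v) w = dot u w - dot v w.
Proof. by rewrite dotDl dotNl. Qed.

Lemma dotZl a u v : dot (a *: u) v = a * dot u v.
Proof. by rewrite /dot mulr_sumr; apply: eq_bigr => k _; rewrite mxE mulrA. Qed.

Lemma dotBr u v w : dot w (u - v) = dot w u - dot w v.
Proof. by rewrite dotC dotBl !(dotC w). Qed.

Lemma dotZr a u v : dot v (a *: u) = a * dot v u.
Proof. by rewrite dotC dotZl dotC. Qed.

Lemma dot_suml (I : finType) (F : I -> 'rV[R]_n) v :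
  dot (\sum_i F i) v = \sum_i dot (F i) v.
Proof.
by rewrite /dot exchange_big; apply: eq_bigr => k _; rewrite summxE mulr_suml.
Qed.

Lemma dot_sumr (I : finType) (F : I -> 'rV[R]_n) v :
  dot v (\sum_i F i) = \sum_i dot v (F i).
Proof. by rewrite dotC dot_suml; apply: eq_bigr => i _; rewrite dotC. Qed.

Lemma dot_delta u j : dot u (delta_mx 0 j) = u 0 j.
Proof.
rewrite /dot (bigD1 j) //= big1 ?addr0 => [|k nkj]; rewrite mxE.
  by rewrite !eqxx mulr1.
by rewrite (negbTE nkj) andbF mulr0.
Qed.

Lemma dot_ge0 u : 0 <= dot u u.
Proof. by apply: sumr_ge0 => k _; rewrite -expr2 sqr_ge0. Qed.

Lemma dot_eq0 u : dot u u = 0 -> u = 0.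
Proof.
move=> u0; apply/rowP => k; rewrite mxE; apply/eqP.
have sq_ge0 k' : true -> 0 <= u 0 k' * u 0 k' by rewrite -expr2 sqr_ge0.
by rewrite -[_ == 0]orbb -mulf_eq0; apply/eqP/(psumr_eq0P sq_ge0 u0).
Qed.

Lemma dot_sqrB u v : dot (u - v) (u - v) = dot u u - 2 * dot u v + dot v v.
Proof. rewrite !dotBl !dotBr (dotC v u); ring. Qed.

Definition csum u : R := \sum_i u 0 i.

Lemma dot_const1 u : dot u (const_mx 1) = csum u.
Proof. by apply: eq_bigr => i _; rewrite mxE mulr1. Qed.

Lemma csum_mulmx u : csum u = (u *m (const_mx 1 : 'cV_n)) 0 0.
Proof. by rewrite -dot_const1 mxE; apply: eq_bigr => i _; rewrite !mxE. Qed.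

Lemma csumB u v : csum (u - v) = csum u - csum v.
Proof. by rewrite /csum -sumrB; apply: eq_bigr => i _; rewrite !mxE. Qed.

Lemma csum_delta j : csum (delta_mx 0 j) = 1.
Proof.
have -> : csum (delta_mx 0 j) = dot (const_mx 1) (delta_mx 0 j).
  by apply: eq_bigr => i _; rewrite [const_mx _ _ _]mxE mul1r.
by rewrite dot_delta mxE.
Qed.

End Dot.

Lemma csum_const (R : realFieldType) n (a : R) :
  csum (const_mx a : 'rV_n) = a *+ n.
Proof.
rewrite /csum (eq_bigr (fun _ => a)) => [|i _]; last by rewrite mxE.
by rewrite sumr_const card_ord.
Qed.

Lemma csum_uniform (R : realFieldType) n :
  csum (n.+1%:R^-1 *: const_mx 1 : 'rV[R]_n.+1) = 1.
Proof.
rewrite -dot_const1 dotZl dot_const1 csum_const -mulr_natr mul1r mulVf //.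
by rewrite pnatr_eq0.
Qed.

Lemma sqnorm_sub_uniform (R : realFieldType) n (l : 'rV[R]_n.+1) :
  csum l = 1 ->
  dot (l - n.+1%:R^-1 *: const_mx 1) (l - n.+1%:R^-1 *: const_mx 1) =
  dot l l - n.+1%:R^-1.
Proof.
move=> l1; rewrite dot_sqrB !dotZr !dotZl !dot_const1 l1 csum_const.
by field; rewrite addrC natr1 pnatr_eq0.
Qed.

Section Weights.
Variables (R : realFieldType) (n : nat) (l : 'rV[R]_n).
Hypothesis l_sum1 : csum l = 1.

Lemma weights_le1 : (forall j, 0 <= l 0 j) -> forall j, l 0 j <= 1.
Proof.
move=> l_ge0 j; rewrite -l_sum1 /csum (bigD1 j) //= lerDl.
by apply: sumr_ge0 => k _.
Qed.

Lemma weights_nonneg_sqnorm : (forall j, 0 <= l 0 j) ->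
  dot l l <= 1 /\ (dot l l = 1 -> exists k, l = delta_mx 0 k).
Proof.
move=> l_ge0.
have defect_ge0 j : true -> 0 <= l 0 j - l 0 j ^+ 2.
  move=> _; rewrite subr_ge0 expr2 ler_piMr //; exact: weights_le1.
have defect_sum : \sum_j (l 0 j - l 0 j ^+ 2) = 1 - dot l l.
  by rewrite sumrB -l_sum1; congr (_ - _); apply: eq_bigr => j _; rewrite expr2.
split=> [|l1]; first by rewrite -subr_ge0 -defect_sum; apply: sumr_ge0.
have l01 j : l 0 j = 0 \/ l 0 j = 1.
  have defect0 : \sum_j (l 0 j - l 0 j ^+ 2) = 0 by rewrite defect_sum l1 subrr.
  have /eqP := psumr_eq0P defect_ge0 defect0 (i := j) isT.
  rewrite expr2 -{1}[l 0 j]mulr1 -mulrBr mulf_eq0 subr_eq0.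
  by case/orP=> /eqP; auto.
have [k lk1] : exists k, l 0 k = 1.
  case: (pickP (fun k => l 0 k == 1)) => [k /eqP|l_ne1]; first by exists k.
  suff : csum l = 0 by rewrite l_sum1; move/eqP; rewrite oner_eq0.
  by apply: big1 => j _; case: (l01 j) => // /eqP; rewrite l_ne1.
have rest0 : \sum_(j | j != k) l 0 j = 0.
  by move: l_sum1; rewrite /csum (bigD1 k) //= lk1 -[X in _ = X]addr0 => /addrI.
exists k; apply/rowP => j; rewrite mxE eqxx /=.
case: eqVneq => [->|njk] //.
by apply: (psumr_eq0P (fun j _ => l_ge0 j) rest0).
Qed.

Lemma weights_sqnorm_le1 : (forall j, dot l l - 1 <= 2 * l 0 j) ->
  dot l l <= 1 /\ (dot l l = 1 -> exists k, l = delta_mx 0 k).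
Proof.
move=> l_lb.
have l_ge0 : 1 <= dot l l -> forall j, 0 <= l 0 j.
  by move=> s_ge1 j; have := l_lb j; lra.
case: (lerP (dot l l) 1) => [s_le1|s_gt1].
  by split=> // s1; apply: (weights_nonneg_sqnorm (l_ge0 _)).2; rewrite ?s1.
have [] := weights_nonneg_sqnorm (l_ge0 (ltW s_gt1)).
by rewrite leNgt s_gt1.
Qed.

End Weights.

Section AffineCombination.
Variables (R : realFieldType) (d n : nat) (x : 'I_n -> 'rV[R]_d).

Definition comb (l : 'rV[R]_n) : 'rV[R]_d := l *m \matrix_i x i.

Lemma combE l : comb l = \sum_i l 0 i *: x i.
Proof. by rewrite /comb mulmx_sum_row; under eq_bigr do rewrite rowK. Qed.

Lemma combB l m : comb (l - m) = comb l - comb m.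
Proof. exact: mulmxBl. Qed.

Lemma comb_delta k : comb (delta_mx 0 k) = x k.
Proof. by rewrite /comb -rowE rowK. Qed.

Lemma sqnorm_comb_dist l : csum l = 0 ->
  dot (comb l) (comb l) =
  - (\sum_i \sum_k l 0 i * l 0 k * dot (x i - x k) (x i - x k)) / 2.
Proof.
move=> l0; have {}l0 : \sum_k l 0 k = 0 := l0.
set c := comb l; set T := \sum_k l 0 k * dot (x k) (x k).
have inner i : \sum_k l 0 k * dot (x i - x k) (x i - x k) = T - 2 * dot (x i) c.
  have -> : \sum_k l 0 k * dot (x i - x k) (x i - x k) =
      \sum_k (dot (x i) (x i) * l 0 k + l 0 k * dot (x k) (x k)
              - 2 * dot (x i) (l 0 k *: x k)).
    by apply: eq_bigr => k _; rewrite dot_sqrB dotZr; ring.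
  by rewrite sumrB big_split /= -!mulr_sumr -dot_sumr -combE l0 mulr0 add0r.
have outer : \sum_i \sum_k l 0 i * l 0 k * dot (x i - x k) (x i - x k) =
    \sum_i (T * l 0 i - 2 * dot (l 0 i *: x i) c).
  apply: eq_bigr => i _.
  have -> : T * l 0 i - 2 * dot (l 0 i *: x i) c = l 0 i * (T - 2 * dot (x i) c).
    by rewrite dotZl; ring.
  by rewrite -inner mulr_sumr; apply: eq_bigr => k _; rewrite mulrA.
by rewrite outer sumrB -!mulr_sumr -dot_suml -combE l0; field.
Qed.

Hypothesis x_unit : forall i j, i != j -> dot (x i - x j) (x i - x j) = 1.

Lemma sqnorm_comb0 l : csum l = 0 -> dot (comb l) (comb l) = dot l l / 2.
Proof.
move=> l0; rewrite sqnorm_comb_dist //.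
suff row_sum i :
    \sum_k l 0 i * l 0 k * dot (x i - x k) (x i - x k) = - (l 0 i * l 0 i).
  by rewrite (eq_bigr _ (fun i _ => row_sum i)) sumrN opprK.
have others : \sum_(k | k != i) l 0 k = - l 0 i.
  by apply/esym/addr0_eq; rewrite /csum (bigD1 i) in l0.
rewrite (bigD1 i) //= subrr dot0l mulr0 add0r.
rewrite (eq_bigr (fun k => l 0 i * l 0 k)) => [|k nki]; last first.
  by rewrite x_unit 1?eq_sym ?mulr1.
by rewrite -mulr_sumr others mulrN.
Qed.

Lemma sqdist_comb l m : csum l = csum m ->
  dot (comb l - comb m) (comb l - comb m) = dot (l - m) (l - m) / 2.
Proof. by move=> lm; rewrite -combB sqnorm_comb0 // csumB lm subrr. Qed.

Lemma sqdist_comb_vertex l j : csum l = 1 ->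
  dot (comb l - x j) (comb l - x j) = (dot l l + 1) / 2 - l 0 j.
Proof.
move=> l1; rewrite -comb_delta sqdist_comb ?csum_delta //.
rewrite dot_sqrB dot_delta [dot _ (delta_mx _ _)]dot_delta mxE !eqxx /=.
by field.
Qed.

End AffineCombination.

Lemma comb_onto (R : realFieldType) d (x : 'I_d.+1 -> 'rV[R]_d) :
  (forall i j, i != j -> dot (x i - x j) (x i - x j) = 1) ->
  forall p, exists2 l, csum l = 1 & comb x l = p.
Proof.
move=> x_unit p.
pose A := row_mx (\matrix_i x i) (const_mx 1 : 'cV_d.+1).
(* A kernel vector v of A has csum v = 0 and comb x v = 0, so |v|^2 = 0. *)
have A_free : row_free A.
  apply: inj_row_free => v; rewrite mul_mx_row => /eqP; rewrite row_mx_eq0.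
  case/andP=> /eqP comb0 /eqP sum0.
  have csum0 : csum v = 0 by rewrite csum_mulmx sum0 mxE.
  apply: dot_eq0; have := sqnorm_comb0 x_unit csum0.
  rewrite /comb comb0 dot0l => /esym /eqP.
  by rewrite mulf_eq0 invr_eq0 pnatr_eq0 orbF => /eqP.
have [B BA] : exists B, B *m A = 1%:M.
  by apply/row_fullP; rewrite /row_full (eqP A_free) addn1.
have : row_mx p 1 *m B *m A = row_mx p 1 by rewrite -mulmxA BA mulmx1.
rewrite mul_mx_row => /eq_row_mx [comb_p sum1].
by exists (row_mx p 1 *m B); rewrite ?csum_mulmx ?sum1 ?mxE.
Qed.

Lemma sum_sqdist_equidistant (R : realFieldType) k m
    (a : 'I_m.+1 -> 'rV[R]_k) c q :
  (forall i j, i != j -> dot (a i - a j) (a i - a j) = c) ->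
  m%:R * c / 2 <= \sum_j dot (a j - q) (a j - q).
Proof.
move=> a_eq; set b := fun j => a j - q; set T := \sum_j dot (b j) (b j).
have row_total j : \sum_l dot (a j - a l) (a j - a l) = m%:R * c.
  rewrite (bigD1 j) //= subrr dot0l add0r (eq_bigr (fun _ => c)) => [|l ?].
    by rewrite sumr_const cardC1 card_ord mulr_natl.
  by rewrite a_eq // eq_sym.
have total : \sum_j \sum_l dot (a j - a l) (a j - a l) =
    2 * (m.+1%:R * T - dot (\sum_j b j) (\sum_j b j)).
  have ab j l : a j - a l = b j - b l by rewrite /b opprB addrA subrK.
  under eq_bigr => j _ do under eq_bigr => l _ do rewrite ab dot_sqrB.
  under eq_bigr => j _ do
    rewrite big_split sumrB /= sumr_const card_ord -mulr_sumr -dot_sumr.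
  rewrite big_split sumrB /= sumr_const card_ord -mulr_sumr -dot_suml -/T.
  by rewrite sumrMnl -/T -[T *+ _]mulr_natl; ring.
have : m.+1%:R * (m%:R * c) <= m.+1%:R * (2 * T).
  have <- : \sum_j \sum_l dot (a j - a l) (a j - a l) = m.+1%:R * (m%:R * c).
    rewrite (eq_bigr _ (fun j _ => row_total j)) sumr_const card_ord.
    by rewrite [RHS]mulr_natl.
  by rewrite total; have := dot_ge0 (\sum_j b j); lra.
by rewrite ler_pM2l ?ltr0Sn // => ?; lra.
Qed.

Lemma unit_simplex_vertices_sub (R : realFieldType) d
    (x y : 'I_d.+1 -> 'rV[R]_d) :
  (forall i j, i != j -> dot (x i - x j) (x i - x j) = 1) ->
  (forall i j, i != j -> dot (y i - y j) (y i - y j) = 1) ->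
  (forall i j, dot (y j - x i) (y j - x i) <= 1) ->
  forall j, exists i, y j = x i.
Proof.
move=> x_unit y_unit close.
have [l l1 yl] : exists2 l : 'I_d.+1 -> 'rV[R]_d.+1,
    forall j, csum (l j) = 1 & forall j, comb x (l j) = y j.
  by have [l ? ?] := fin_all_exists2 (fun j => comb_onto x_unit (y j)); exists l.
have l_sqnorm j : dot (l j) (l j) <= 1 /\
    (dot (l j) (l j) = 1 -> exists k, l j = delta_mx 0 k).
  apply: weights_sqnorm_le1 (l1 j) _ => i.
  by have := close i j; rewrite -yl sqdist_comb_vertex // => ?; lra.
pose w : 'rV[R]_d.+1 := d.+1%:R^-1 *: const_mx 1.
have centroid_dist j : dot (y j - comb x w) (y j - comb x w) =
    (dot (l j) (l j) - d.+1%:R^-1) / 2.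
  by rewrite -yl sqdist_comb ?sqnorm_sub_uniform // l1 csum_uniform.
have spread : d%:R <= \sum_(j < d.+1) dot (l j) (l j) - 1.
  have := sum_sqdist_equidistant (comb x w) y_unit.
  rewrite (eq_bigr _ (fun j _ => centroid_dist j)) -mulr_suml sumrB sumr_const.
  by rewrite card_ord -[d.+1%:R^-1 *+ _]mulr_natr mulVf ?pnatr_eq0 // => ?; lra.
have defect_ge0 j : true -> 0 <= 1 - dot (l j) (l j).
  by move=> _; rewrite subr_ge0; case: (l_sqnorm j).
have defect0 : \sum_(j < d.+1) (1 - dot (l j) (l j)) = 0.
  apply/eqP; rewrite eq_le sumr_ge0 // andbT.
  have -> : \sum_(j < d.+1) (1 - dot (l j) (l j)) =
      d.+1%:R - \sum_(j < d.+1) dot (l j) (l j).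
    by rewrite sumrB sumr_const card_ord.
  by rewrite -natr1; lra.
move=> j; have /eqP := psumr_eq0P defect_ge0 defect0 (i := j) isT.
rewrite subr_eq0 eq_sym => /eqP /(l_sqnorm j).2 [k lk].
by exists k; rewrite -yl lk comb_delta.
Qed.

Local Open Scope classical_set_scope.

Section EuclideanDistance.
Variables (R : realType) (d : nat).
Implicit Types (u v : 'rV[R]_d).

Lemma edist_sqr u v : edist u v ^+ 2 = dot (u - v) (u - v).
Proof.
rewrite /edist sqr_sqrtr; last by apply: sumr_ge0 => k _; rewrite sqr_ge0.
by apply: eq_bigr => k _; rewrite !mxE expr2.
Qed.

Lemma edist_le1 u v : edist u v <= 1 -> dot (u - v) (u - v) <= 1.
Proof. by rewrite -edist_sqr => uv1; rewrite exprn_ile1 ?sqrtr_ge0. Qed.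

Lemma regular_unit_simplex_dot (x : 'I_d.+1 -> 'rV[R]_d) :
  regular_unit_simplex x -> forall i j, i != j -> dot (x i - x j) (x i - x j) = 1.
Proof. by move=> x_reg i j ij; rewrite -edist_sqr x_reg // expr1n. Qed.

Lemma edist_le_diam (I : finType) (f : I -> 'rV[R]_d) (A : set 'rV[R]_d) p q :
  A `<=` range f -> A p -> A q -> edist p q <= diam A.
Proof.
move=> Af Ap Aq; apply: ub_le_sup; last by exists p => //; exists q.
exists (\big[Order.max/0]_(ij : I * I) edist (f ij.1) (f ij.2)).
move=> _ [a /Af [i _ <-] [b /Af [j _ <-] <-]].
exact: (le_bigmax _ _ (i, j)).
Qed.

End EuclideanDistance.

Theorem mainTheorem6 (R : realType) (d : nat)
  (x y : 'I_d.+1 -> 'rV[R]_d) :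
  regular_unit_simplex x -> regular_unit_simplex y ->
  diam (range x `|` range y) = 1 ->
  range x = range y.
Proof.
move=> x_reg y_reg diam1.
pose vertex (s : 'I_d.+1 + 'I_d.+1) :=
  match s with inl i => x i | inr j => y j end.
have close p q : (range x `|` range y) p -> (range x `|` range y) q ->
    dot (p - q) (p - q) <= 1.
  move=> Ap Aq; apply: edist_le1; rewrite -diam1.
  apply: (edist_le_diam (f := vertex)) => //.
  by move=> _ [[i _ <-]|[j _ <-]]; [exists (inl i) | exists (inr j)].
have x_unit := regular_unit_simplex_dot x_reg.
have y_unit := regular_unit_simplex_dot y_reg.
have y_sub_x := unit_simplex_vertices_sub x_unit y_unit
  (fun i j => close _ _ (or_intror (imageT _ j)) (or_introl (imageT _ i))).
have x_sub_y := unit_simplex_vertices_sub y_unit x_unit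
  (fun i j => close _ _ (or_introl (imageT _ j)) (or_intror (imageT _ i))).
apply/seteqP; split=> _ [i _ <-].
- by have [j ->] := x_sub_y i; exists j.
- by have [j ->] := y_sub_x i; exists j.
Qed.
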